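(* A C*-algebra $A$ is AF if and only if there exists a map $\rho\colon A\to A$ such that $\|a-\rho(a)\|<1$ for every $a\in A$ and $C^*(\{\rho(a)\}_{a\in F})$ is finite-dimensional for every finite subset $F$ of $A$.
   Context: A C*-algebra is AF if it has a directed family of finite-dimensional C*-subalgebras with dense union. $C^*(S)$ denotes the C*-subalgebra generated by $S$. The map $\rho$ is an arbitrary function (not assumed linear or continuous). *)

From HB Require Import structures.
From mathcomp Require Import all_boot all_order all_algebra.
From mathcomp Require Import all_classical all_reals all_analysis.
From mathcomp Require Import complex.
Set Implicit Arguments. Unset Strict Implicit. Unset Printing Implicit Defensive.
Import Order.TTheory GRing.Theory Num.Theory.
Import numFieldNormedType.Exports.
Local Open Scope classical_set_scope.
Local Open Scope ring_scope.

Section Cstar.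
Variables (R : realType) (A : completeNormedModType R[i]).
Variables (mul : A -> A -> A) (star : A -> A).

Record is_Cstar_algebra : Prop := IsCstar {
  mulA : forall x y z, mul x (mul y z) = mul (mul x y) z;
  mulDl : forall x y z, mul (x + y) z = mul x z + mul y z;
  mulDr : forall x y z, mul x (y + z) = mul x y + mul x z;
  mulZl : forall (c : R[i]) x y, mul (c *: x) y = c *: mul x y;
  mulZr : forall (c : R[i]) x y, mul x (c *: y) = c *: mul x y;
  starD : forall x y, star (x + y) = star x + star y;
  starZ : forall (c : R[i]) x, star (c *: x) = (c^*)%C *: star x;
  starK : forall x, star (star x) = x;
  starM : forall x y, star (mul x y) = mul (star y) (star x);
  norm_mul : forall x y, `|mul x y| <= `|x| * `|y|;
  Cstar_identity : forall x, `|mul (star x) x| = `|x| ^+ 2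
}.

Definition star_subalgebra (B : set A) : Prop :=
  [/\ B 0,
      (forall x y, B x -> B y -> B (x + y)),
      (forall (c : R[i]) x, B x -> B (c *: x)),
      (forall x y, B x -> B y -> B (mul x y)) &
      (forall x, B x -> B (star x))].

Definition Cstar_subalgebra (B : set A) : Prop :=
  star_subalgebra B /\ closed B.

Definition Cstar_gen (S : set A) : set A :=
  \bigcap_(B in [set B | Cstar_subalgebra B /\ S `<=` B]) B.

Definition span_seq (s : seq A) : set A :=
  [set x | exists c : 'I_(size s) -> R[i],
             x = \sum_(i < size s) c i *: nth 0 s i].

Definition finite_dimensional (B : set A) : Prop :=
  exists s : seq A, B `<=` span_seq s.

Definition is_AF : Prop :=
  exists F : set (set A),
    [/\ (forall B, F B -> Cstar_subalgebra B /\ finite_dimensional B),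
        (forall B1 B2, F B1 -> F B2 ->
            exists2 B3, F B3 & B1 `<=` B3 /\ B2 `<=` B3) &
        closure (\bigcup_(B in F) B) = setT].
End Cstar.

From HB Require Import structures.
From mathcomp Require Import all_boot all_order all_algebra.
From mathcomp Require Import all_classical all_reals all_analysis.
From mathcomp Require Import complex.
Import Order.TTheory GRing.Theory Num.Theory.
Import numFieldNormedType.Exports.
Local Open Scope classical_set_scope.
Local Open Scope ring_scope.

(* If [A] is AF, let [rho a] be any point of the dense union of the directed
   family within distance 1 of [a]; finitely many such points lie in a common
   finite-dimensional member, which contains the C*-algebra they generate.
   Conversely, the algebras [C*(rho F)] for finite [F] form a directed family
   of finite-dimensional C*-subalgebras, and their union is dense because
   [e *: rho (e^-1 *: a)] lies within [e] of [a].  Neither direction uses the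
   C*-algebra axioms. *)

Definition directed {T : Type} (F : set (set T)) : Prop :=
  forall B1 B2, F B1 -> F B2 -> exists2 B3, F B3 & B1 `<=` B3 /\ B2 `<=` B3.

Lemma directed_bound_seq {T : Type} {I : eqType} {F : set (set T)}
    {f : I -> set T} {B0 : set T} :
  F B0 -> directed F -> (forall i, F (f i)) ->
  forall s : seq I, exists2 B, F B & forall i, i \in s -> f i `<=` B.
Proof.
move=> FB0 dirF Ff; elim=> [|i s [B FB leB]]; first by exists B0.
have [B' FB' [le_iB' le_BB']] := dirF _ _ (Ff i) FB.
exists B' => // j; rewrite in_cons => /orP[/eqP -> //|js].
exact: subset_trans (leB _ js) le_BB'.
Qed.

Lemma dense_bigcup_approx {K : numFieldType} {V : normedModType K}
    {F : set (set V)} {e : K} :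
  closure (\bigcup_(B in F) B) = setT -> 0 < e ->
  forall a, exists B, exists2 x, F B /\ B x & `|a - x| < e.
Proof.
move=> dense e0 a; have : closure (\bigcup_(B in F) B) a by rewrite dense.
move=> /(_ (ball a e) (nbhsx_ballx a e e0)) [x [[B FB Bx] ax]].
by exists B, x => //; move: ax; rewrite -ball_normE.
Qed.

Lemma approx_rescale {K : numFieldType} {V : normedModType K} {rho : V -> V} :
  (forall a, `|a - rho a| < 1) ->
  forall (e : K) a, 0 < e -> `|a - e *: rho (e^-1 *: a)| < e.
Proof.
move=> rho1 e a e0.
have -> : a - e *: rho (e^-1 *: a) = e *: (e^-1 *: a - rho (e^-1 *: a)).
  by rewrite scalerBr scalerA mulfV ?gt_eqF // scale1r.
by rewrite normrZ gtr0_norm // -[X in _ < X]mulr1 ltr_pM2l.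
Qed.

Section GeneratedSubalgebra.
Set Implicit Arguments.
Variables (R : realType) (A : completeNormedModType R[i]).
Variables (mul : A -> A -> A) (star : A -> A).

Local Notation Cgen := (Cstar_gen mul star).

Lemma Cstar_gen_min (S B : set A) :
  Cstar_subalgebra mul star B -> S `<=` B -> Cgen S `<=` B.
Proof. by move=> CB SB x; apply; split. Qed.

Lemma sub_Cstar_gen (S : set A) : S `<=` Cgen S.
Proof. by move=> x Sx B [_]; apply. Qed.

Lemma Cstar_subalgebra_gen (S : set A) : Cstar_subalgebra mul star (Cgen S).
Proof.
split; last by apply: closed_bigI => B [[_ +] _].
split.
- by move=> B [[[]]].
- by move=> x y Sx Sy B SB; case: (SB) => [[[_ + _ _ _] _] _]; apply; [apply: Sx|apply: Sy].
- by move=> c x Sx B SB; case: (SB) => [[[_ _ + _ _] _] _]; apply; apply: Sx.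
- by move=> x y Sx Sy B SB; case: (SB) => [[[_ _ _ + _] _] _]; apply; [apply: Sx|apply: Sy].
- by move=> x Sx B SB; case: (SB) => [[[_ _ _ _ +] _] _]; apply; apply: Sx.
Qed.

Lemma Cstar_gen_subset (S T : set A) : S `<=` T -> Cgen S `<=` Cgen T.
Proof.
move=> ST; apply: Cstar_gen_min; first exact: Cstar_subalgebra_gen.
exact: subset_trans ST (@sub_Cstar_gen T).
Qed.

Definition approximating_map (rho : A -> A) : Prop :=
  (forall a, `|a - rho a| < 1) /\
  (forall F : set A, finite_set F -> finite_dimensional (Cgen (rho @` F))).

Lemma AF_approximating_map :
  is_AF mul star -> exists rho, approximating_map rho.
Proof.
move=> [F [FCfin dirF dense]].
have near1 a : exists p : set A * A, [/\ F p.1, p.1 p.2 & `|a - p.2| < 1].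
  have [B [x [FB Bx] ax]] := dense_bigcup_approx dense ltr01 a.
  by exists (B, x).
have [pick pickP] := choice near1.
exists (fun a => (pick a).2); split=> [a|G /finite_seqP[s ->]].
  by case: (pickP a).
have [B FB leB] : exists2 B, F B & forall a, a \in s -> (pick a).1 `<=` B.
  have [F0 _ _] := pickP 0.
  by apply: (directed_bound_seq F0 dirF) => a; case: (pickP a).
have [CB [t Bt]] := FCfin _ FB.
exists t; apply: subset_trans Bt; apply: Cstar_gen_min => // _ [a sa <-].
by apply: (leB _ sa); case: (pickP a).
Qed.

Lemma approximating_map_AF (rho : A -> A) :
  approximating_map rho -> is_AF mul star.
Proof.
move=> [rho1 rho_fin].
exists [set B | exists2 G, finite_set G & B = Cgen (rho @` G)]; split.
- by move=> _ [G finG ->]; split; [exact: Cstar_subalgebra_gen|exact: rho_fin].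
- move=> _ _ [G1 fin1 ->] [G2 fin2 ->]; exists (Cgen (rho @` (G1 `|` G2))).
    by exists (G1 `|` G2); rewrite ?finite_setU ?fin1.
  by split; apply: Cstar_gen_subset; apply: image_subset => x; [left|right].
- apply/seteqP; split=> // a _ N /nbhs_ballP[e /= e0 eN].
  exists (e *: rho (e^-1 *: a)); split; last first.
    by apply: eN; rewrite -ball_normE /=; exact: approx_rescale.
  exists (Cgen (rho @` [set e^-1 *: a])).
    by exists [set e^-1 *: a]; first exact: finite_set1.
  have [[_ _ gen_scale _ _] _] := @Cstar_subalgebra_gen (rho @` [set e^-1 *: a]).
  by apply: gen_scale; apply: sub_Cstar_gen; exists (e^-1 *: a).
Qed.

End GeneratedSubalgebra.

Theorem lemma6p1 (R : realType) (A : completeNormedModType R[i])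
    (mul : A -> A -> A) (star : A -> A) :
  is_Cstar_algebra mul star ->
  (is_AF mul star <->
   exists rho : A -> A,
     (forall a : A, `|a - rho a| < 1) /\
     (forall F : set A, finite_set F ->
        finite_dimensional (Cstar_gen mul star (rho @` F)))).
Proof.
move=> _; split; first exact: AF_approximating_map.
by move=> [rho rhoP]; exact: (approximating_map_AF rhoP).
Qed.
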